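(* In the setting described in the context, for every $n\ge1$ and every $y\in\mathbb R^p$, $$\tau_n\widetilde J(x_n,w_n,y)\le\langle x_{n+1}-z_{n+1},x^\star-x_{n+1}\rangle+\frac1\beta\langle y_n-y_{n-1},y-y_n\rangle+\psi\delta_n\langle x_n-z_{n+1},x_{n+1}-x_n\rangle+\tau_n\langle\theta_n,x_n-x_{n+1}\rangle,$$ where $\widetilde J(x,w,y)=F(x,w)+\langle y,H(x)-w\rangle-F(x^\star,w^\star)$.
   Context: Let $f:\mathbb{R}^p\to(-\infty,+\infty]$ and $g:\mathbb{R}^q\to(-\infty,+\infty]$ be proper closed convex functions; $f^*$ is the Fenchel conjugate, $\mathrm{dom}$ the effective domain, $\mathrm{Prox}_{\lambda h}(x)=\arg\min_u\{h(u)+\frac{1}{2\lambda}\|u-x\|^2\}$. Let $h:\mathbb R^q\to\mathbb R$ be convex with $L_h$-Lipschitz gradient, and $H:\mathrm{dom}(g)\to\mathrm{dom}(f)$ continuously differentiable with Jacobian $H'$, such that $x\mapsto\langle H(x),y\rangle$ is convex for every $y\in\mathrm{dom}(f^* )$. Set $\Phi(x,y)=h(x)+\langle H(x),y\rangle$ and $\mathcal L(x,y)=g(x)+\Phi(x,y)-f^*(y)$. Assume: (A1) the set of saddle points $\{(x^\star,y^\star)\in\mathrm{dom}(g)\times\mathrm{dom}(f^* ):-\nabla_x\Phi(x^\star,y^\star)\in\partial g(x^\star),\ \nabla_y\Phi(x^\star,y^\star)\in\partial f^*(y^\star)\}$ is nonempty, $\mathrm{dom}(g)\times\mathrm{dom}(f^*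 )\subseteq\mathrm{dom}(\Phi)$, $\mathcal L(x^\star,y^\star)$ finite; (A2) $\Phi(\cdot,y)$ convex differentiable, $\Phi(x,\cdot)$ concave differentiable, and on every pair of bounded sets $\mathcal X,\mathcal Y$ there are $L_{yy},L_{xx}\ge0,L_{xy}>0$ with $\|\nabla_y\Phi(x,y)-\nabla_y\Phi(x,\tilde y)\|\le L_{yy}\|y-\tilde y\|$, $\|\nabla_x\Phi(x,y)-\nabla_x\Phi(\tilde x,\tilde y)\|\le L_{xx}\|x-\tilde x\|+L_{xy}\|y-\tilde y\|$ on $(\mathcal X\cap\mathrm{dom}(g))\times(\mathcal Y\cap\mathrm{dom}(f^* ))$. Let $F(x,w)=g(x)+h(x)+f(w)$, and let $(x^\star,w^\star,y^\star)$ be a fixed point of $\widetilde\Omega=\{(x,w,y)\in\mathrm{dom}(g)\times\mathrm{dom}(f)\times\mathrm{dom}(f^* ): -H'(x)^\top y-\nabla h(x)\in\partial g(x),\ y\in\partial f(w),\ H(x)=w\}$. Algorithm PDAc-L (applied to this $\Phi$): choose $\psi\in(1,1+\sqrt3)$, $\xi>0$, $\varphi>1$ with $\omega:=2\psi-\xi-\frac{\psi^3\varphi}{1+\psi}>0$, $\tau_{\max}>0$, $\nu,\mu\in(0,1)$, $\eta\in[0,1)$, integer $M\ge1$, $\beta>0$, $x_0\in\mathrm{dom}(g)$, $y_0\in\mathrm{dom}(f^* )$, $\tau_0\in(0,\tau_{\max}]$; $z_0=x_0$, $\delta_0=1$. For $n\ge1$: $z_n=\frac{\psi-1}{\psi}x_{n-1}+\frac1\psi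 z_{n-1}$, $x_n=\mathrm{Prox}_{\tau_{n-1}g}(z_n-\tau_{n-1}\nabla_x\Phi(x_{n-1},y_{n-1}))$; with $\tau=\min\{\varphi\tau_{n-1},\tau_{\max}\}$, set $\tau_n=\tau\mu^i$, $y_n=\mathrm{Prox}_{\beta\tau_nf^*}(y_{n-1}+\beta\tau_nH(x_n))$, where $i\ge0$ is the smallest integer with $\frac{\tau_n\tau_{n-1}}{\xi}\|\theta_n\|^2+2\tau_n\Phi_n^y\le\nu r_n+(1-\nu)c_n$, $\theta_n=\nabla_x\Phi(x_n,y_n)-\nabla_x\Phi(x_{n-1},y_{n-1})$, $\Phi_n^y=\Phi(x_n,y_{n-1})+\langle\nabla_y\Phi(x_n,y_{n-1}),y_n-y_{n-1}\rangle-\Phi(x_n,y_n)$ (here $=0$), $r_n=\omega\delta_{n-1}\|x_n-x_{n-1}\|^2+\frac1\beta\|y_n-y_{n-1}\|^2$, $c_n=\frac{\eta}{|\mathcal I_n|}\sum_{i\in\mathcal I_n}r_i$, $\mathcal I_n=\{n-1,\dots,\max\{n-M,1\}\}$ ($c_1:=0$); $\delta_n=\tau_n/\tau_{n-1}$. Define $w_n=\mathrm{Prox}_{f/(\beta\tau_n)}(y_{n-1}/(\beta\tau_n)+H(x_n))$, so that $y_n=y_{n-1}+\beta\tau_n(H(x_n)-w_n)$. *)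

From HB Require Import structures.
From mathcomp Require Import all_boot all_order all_algebra.
From mathcomp Require Import boolp classical_sets reals constructive_ereal ereal.

Set Implicit Arguments.
Unset Strict Implicit.
Unset Printing Implicit Defensive.

Import Order.TTheory GRing.Theory Num.Theory.
Local Open Scope ring_scope.
Local Open Scope ereal_scope.
Local Open Scope ring_scope.

Section Defs.
Variable R : realType.

Definition vec (n : nat) := 'cV[R]_n.

Definition dotv {n} (u v : vec n) : R := \sum_(i < n) u i 0 * v i 0.
Definition normv {n} (u : vec n) : R := Num.sqrt (dotv u u).

Definition edom {n} (phi : vec n -> \bar R) (x : vec n) : Prop := (phi x < +oo)%E.

Definition eproper {n} (phi : vec n -> \bar R) : Prop :=
  (forall x, phi x != -oo%E) /\ (exists x, phi x \is a fin_num).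

Definition econvex {n} (phi : vec n -> \bar R) : Prop :=
  forall (x y : vec n) (t : R), 0 < t < 1 ->
    (phi (t *: x + (1 - t) *: y)%R <= t%:E * phi x + (1 - t)%R%:E * phi y)%E.

(* closed = lower semicontinuous *)
Definition eclosed {n} (phi : vec n -> \bar R) : Prop :=
  forall (x : vec n) (a : \bar R), (a < phi x)%E ->
    exists2 d : R, 0 < d & forall u : vec n, normv (u - x) < d -> (a < phi u)%E.

Definition proper_closed_convex {n} (phi : vec n -> \bar R) : Prop :=
  [/\ eproper phi, eclosed phi & econvex phi].

Definition fconj {n} (phi : vec n -> \bar R) (y : vec n) : \bar R :=
  ereal_sup [set ((dotv x y)%:E - phi x)%E | x in [set: vec n]].

Definition subdiff {n} (phi : vec n -> \bar R) (x u : vec n) : Prop :=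
  phi x \is a fin_num /\
  forall v : vec n, (phi x + (dotv u (v - x)%R)%:E <= phi v)%E.

Definition is_prox {n} (lam : R) (phi : vec n -> \bar R) (v u : vec n) : Prop :=
  forall u' : vec n,
    (phi u + ((2 * lam)^-1 * normv (u - v) ^+ 2)%R%:E
       <= phi u' + ((2 * lam)^-1 * normv (u' - v) ^+ 2)%R%:E)%E.

Definition convex_on {n} (D : vec n -> Prop) (phi : vec n -> R) : Prop :=
  forall (x y : vec n) (t : R), D x -> D y -> 0 < t < 1 ->
    phi (t *: x + (1 - t) *: y) <= t * phi x + (1 - t) * phi y.

Definition bounded_set {n} (S : vec n -> Prop) : Prop :=
  exists B : R, forall x, S x -> normv x <= B.

Definition has_gradient {n} (h : vec n -> R) (gh : vec n -> vec n) : Prop :=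
  forall (x : vec n) (eps : R), 0 < eps ->
    exists2 d : R, 0 < d & forall v : vec n, normv v < d ->
      `|h (x + v) - h x - dotv (gh x) v| <= eps * normv v.

Definition has_jacobian_on {p q} (D : vec q -> Prop) (H : vec q -> vec p)
  (JH : vec q -> 'M[R]_(p, q)) : Prop :=
  forall (x : vec q) (eps : R), D x -> 0 < eps ->
    exists2 d : R, 0 < d & forall v : vec q, D (x + v) -> normv v < d ->
      normv (H (x + v) - H x - JH x *m v) <= eps * normv v.

Definition mx_continuous_on {p q} (D : vec q -> Prop)
  (JH : vec q -> 'M[R]_(p, q)) : Prop :=
  forall (x : vec q) (eps : R), D x -> 0 < eps ->
    exists2 d : R, 0 < d & forall x' : vec q, D x' -> normv (x' - x) < d ->
      forall i j, `|JH x' i j - JH x i j| < eps.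

Definition Phi {p q} (h : vec q -> R) (H : vec q -> vec p) (x : vec q) (y : vec p) : R :=
  h x + dotv (H x) y.
Definition gradxPhi {p q} (gh : vec q -> vec q) (JH : vec q -> 'M[R]_(p, q))
  (x : vec q) (y : vec p) : vec q := gh x + (JH x)^T *m y.
Definition gradyPhi {p q} (H : vec q -> vec p) (x : vec q) (y : vec p) : vec p := H x.

Definition delta (tau : nat -> R) (n : nat) : R :=
  if n is m.+1 then tau m.+1 / tau m else 1.

Definition rterm {p q} (omega beta d : R) (a b : vec q) (u v : vec p) : R :=
  omega * d * normv (a - b) ^+ 2 + beta^-1 * normv (u - v) ^+ 2.

(* the accepted r_i, for i >= 1 *)
Definition rseq {p q} (omega beta : R) (x : nat -> vec q) (y : nat -> vec p)
  (tau : nat -> R) (i : nat) : R :=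
  rterm omega beta (delta tau i.-1) (x i) (x i.-1) (y i) (y i.-1).

Definition cseq {p q} (omega beta eta : R) (M : nat) (x : nat -> vec q)
  (y : nat -> vec p) (tau : nat -> R) (n : nat) : R :=
  if (n <= 1)%N then 0
  else eta / (n - maxn (n - M) 1)%:R *
       \sum_(maxn (n - M) 1 <= i < n) rseq omega beta x y tau i.

(* line-search acceptance test at iteration n >= 1 for a trial step t
   and trial dual point yc *)
Definition ls_cond {p q} (h : vec q -> R) (gh : vec q -> vec q) (H : vec q -> vec p)
  (JH : vec q -> 'M[R]_(p, q)) (xi nu omega beta eta : R) (M : nat)
  (x : nat -> vec q) (y : nat -> vec p) (tau : nat -> R) (n : nat)
  (t : R) (yc : vec p) : Prop :=
  let theta := gradxPhi gh JH (x n) yc - gradxPhi gh JH (x n.-1) (y n.-1) in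
  let Phiy := Phi h H (x n) (y n.-1) + dotv (gradyPhi H (x n) (y n.-1)) (yc - y n.-1)
              - Phi h H (x n) yc in
  let r := rterm omega beta (delta tau n.-1) (x n) (x n.-1) yc (y n.-1) in
  t * tau n.-1 / xi * normv theta ^+ 2 + 2 * t * Phiy
    <= nu * r + (1 - nu) * cseq omega beta eta M x y tau n.

Definition PDAcL_run {p q} (g : vec q -> \bar R) (h : vec q -> R)
  (gh : vec q -> vec q) (f : vec p -> \bar R) (H : vec q -> vec p)
  (JH : vec q -> 'M[R]_(p, q))
  (psi xi phi tau_max nu mu eta beta tau0 : R) (M : nat) (x0 : vec q) (y0 : vec p)
  (x z : nat -> vec q) (y : nat -> vec p) (tau : nat -> R) : Prop :=
  let omega := 2 * psi - xi - psi ^+ 3 * phi / (1 + psi) in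
  [/\ x 0 = x0, y 0 = y0, z 0 = x0, tau 0 = tau0 &
  forall n : nat, (0 < n)%N ->
  [/\ z n = ((psi - 1) / psi) *: x n.-1 + psi^-1 *: z n.-1,
      is_prox (tau n.-1) g
        (z n - tau n.-1 *: gradxPhi gh JH (x n.-1) (y n.-1)) (x n) &
      let tbar := Num.min (phi * tau n.-1) tau_max in
      exists i : nat,
        [/\ tau n = tbar * mu ^+ i,
            is_prox (beta * tau n) (fconj f) (y n.-1 + (beta * tau n) *: H (x n)) (y n),
            ls_cond h gh H JH xi nu omega beta eta M x y tau n (tau n) (y n) &
            forall j : nat, (j < i)%N -> forall yc : vec p,
              is_prox (beta * (tbar * mu ^+ j)) (fconj f)
                (y n.-1 + (beta * (tbar * mu ^+ j)) *: H (x n)) yc ->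
              ~ ls_cond h gh H JH xi nu omega beta eta M x y tau n
                  (tbar * mu ^+ j) yc]]].

Definition Fobj {p q} (g : vec q -> \bar R) (h : vec q -> R) (f : vec p -> \bar R)
  (x : vec q) (w : vec p) : \bar R := (g x + (h x)%:E + f w)%E.

Definition Jtilde {p q} (g : vec q -> \bar R) (h : vec q -> R) (f : vec p -> \bar R)
  (H : vec q -> vec p) (xs : vec q) (ws : vec p) (x : vec q) (w : vec p) (y : vec p)
  : \bar R :=
  (Fobj g h f x w + (dotv y (H x - w)%R)%:E - Fobj g h f xs ws)%E.

(* saddle points of L(x,y) = g(x) + Phi(x,y) - f^*(y) *)
Definition is_saddle {p q} (g : vec q -> \bar R) (h : vec q -> R) (gh : vec q -> vec q)
  (f : vec p -> \bar R) (H : vec q -> vec p) (JH : vec q -> 'M[R]_(p, q))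
  (xs : vec q) (ys : vec p) : Prop :=
  [/\ edom g xs, edom (fconj f) ys,
      subdiff g xs (- gradxPhi gh JH xs ys) &
      subdiff (fconj f) ys (gradyPhi H xs ys)].

Definition Lagr {p q} (g : vec q -> \bar R) (h : vec q -> R) (f : vec p -> \bar R)
  (H : vec q -> vec p) (x : vec q) (y : vec p) : \bar R :=
  (g x + (Phi h H x y)%:E - fconj f y)%E.

End Defs.

From HB Require Import structures.
From mathcomp Require Import all_boot all_order all_algebra.
From mathcomp Require Import boolp classical_sets reals constructive_ereal ereal.
From mathcomp Require Import ring lra.
Import Order.TTheory GRing.Theory Num.Theory.
Local Open Scope ring_scope.

(* The x-updates are proximal gradient steps for g, so x_(k+1) carries the subgradient
   (z_(k+1) - x_(k+1)) / tau_k - grad_x Phi(x_k, y_k) of g; testing it at xs for k = n and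
   at x_(n+1) for k = n - 1 (where z_n - x_n = psi (z_(n+1) - x_n)) bounds
   tau_n (g(x_n) - g(xs)).  By the Moreau decomposition, y_n is the proximal point of f^*
   precisely because y_n = y_(n-1) + beta tau_n (H(x_n) - w_n) is a subgradient of f at
   w_n, which bounds f(w_n) - f(ws).  Convexity of Phi(., y_n) gives
   <grad_x Phi(x_n, y_n), xs - x_n> <= Phi(xs, y_n) - Phi(x_n, y_n), and adding the three
   estimates, with H(xs) = ws, yields the inequality. *)

Section InnerProduct.
Context {R : realType} {n : nat}.
Implicit Types (a b u v w : vec R n) (t : R).

Lemma vecP a b : (forall i, a i 0 = b i 0) -> a = b.
Proof. by move=> eq_ab; apply/matrixP => i j; rewrite (ord1 j). Qed.

Lemma dotvC u v : dotv u v = dotv v u.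
Proof. by apply: eq_bigr => i _; rewrite mulrC. Qed.

Lemma dotvDl u v w : dotv (u + v) w = dotv u w + dotv v w.
Proof. by rewrite /dotv -big_split; apply: eq_bigr => i _; rewrite mxE mulrDl. Qed.

Lemma dotvZl t u w : dotv (t *: u) w = t * dotv u w.
Proof. by rewrite /dotv mulr_sumr; apply: eq_bigr => i _; rewrite mxE mulrA. Qed.

Lemma dotvNl u w : dotv (- u) w = - dotv u w.
Proof. by rewrite -scaleN1r dotvZl mulN1r. Qed.

Lemma dotvBl u v w : dotv (u - v) w = dotv u w - dotv v w.
Proof. by rewrite dotvDl dotvNl. Qed.

Lemma dotvDr u v w : dotv w (u + v) = dotv w u + dotv w v.
Proof. by rewrite dotvC dotvDl !(dotvC w). Qed.

Lemma dotvZr t u w : dotv w (t *: u) = t * dotv w u.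
Proof. by rewrite dotvC dotvZl dotvC. Qed.

Lemma dotvBr u v w : dotv w (u - v) = dotv w u - dotv w v.
Proof. by rewrite dotvC dotvBl !(dotvC w). Qed.

Lemma dotv0r u : dotv u 0 = 0.
Proof. by rewrite /dotv big1 // => i _; rewrite mxE mulr0. Qed.

Lemma dotv0l u : dotv 0 u = 0.
Proof. by rewrite dotvC dotv0r. Qed.

Lemma dotvv_ge0 u : 0 <= dotv u u.
Proof. by apply: sumr_ge0 => i _; rewrite -expr2 sqr_ge0. Qed.

Lemma dotvv_eq0 u : (dotv u u == 0) = (u == 0).
Proof.
apply/idP/eqP => [/eqP uu0|->]; last by rewrite dotv0r.
apply: vecP => i; rewrite mxE; apply/eqP; rewrite -[_ == 0]orbb -mulf_eq0.
by move: uu0 => /psumr_eq0P -> // j _; rewrite -expr2 sqr_ge0.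
Qed.

Lemma normv_ge0 u : 0 <= normv u.
Proof. exact: sqrtr_ge0. Qed.

Lemma normv_sqr u : normv u ^+ 2 = dotv u u.
Proof. by rewrite sqr_sqrtr // dotvv_ge0. Qed.

Lemma normvZ t u : normv (t *: u) = `|t| * normv u.
Proof. by rewrite /normv dotvZl dotvZr mulrA -expr2 sqrtrM ?sqr_ge0 // sqrtr_sqr. Qed.

Lemma normv_addZ_sqr a b t :
  normv (a + t *: b) ^+ 2 = normv a ^+ 2 + 2 * t * dotv a b + t ^+ 2 * normv b ^+ 2.
Proof. by rewrite !normv_sqr !dotvDl !dotvDr !dotvZl !dotvZr (dotvC b a); ring. Qed.

Lemma cauchy_schwarz u v : `|dotv u v| <= normv u * normv v.
Proof.
suff uv_le : dotv u v ^+ 2 <= dotv u u * dotv v v.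
  by rewrite -sqrtr_sqr /normv -sqrtrM ?dotvv_ge0 // ler_sqrt // mulr_ge0 ?dotvv_ge0.
have [/eqP|v_neq0] := eqVneq (dotv v v) 0.
  by rewrite dotvv_eq0 => /eqP ->; rewrite !dotv0r expr0n mulr0.
have vv_gt0 : 0 < dotv v v by rewrite lt_def v_neq0 dotvv_ge0.
have := dotvv_ge0 (dotv v v *: u - dotv u v *: v).
rewrite !dotvBl !dotvBr !dotvZl !dotvZr (dotvC v u) => ge0.
rewrite -subr_ge0 -(pmulr_rge0 _ vv_gt0); move: ge0; congr (_ <= _); ring.
Qed.

End InnerProduct.

Lemma dotv_mulmx {R : realType} {p q : nat} (A : 'M[R]_(p, q)) (u : vec R q) (y : vec R p) :
  dotv (A *m u) y = dotv u (A^T *m y).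
Proof.
rewrite /dotv; under eq_bigr do rewrite mxE big_distrl /=.
rewrite exchange_big /=; apply: eq_bigr => j _.
by rewrite mxE big_distrr /=; apply: eq_bigr => i _; rewrite !mxE; ring.
Qed.

Lemma ler0_of_small_mul {R : realFieldType} (a b : R) :
  (forall t, 0 < t < 1 -> a <= t * b) -> a <= 0.
Proof.
move=> a_le; rewrite leNgt; apply/negP => a_gt0.
have bb_gt0 : 0 < `|b| + a by rewrite ltr_pwDr.
set t := a / (2 * (`|b| + a)).
have t_gt0 : 0 < t by rewrite divr_gt0 ?mulr_gt0.
have t2 : t * (2 * (`|b| + a)) = a by rewrite divfK // gt_eqF ?mulr_gt0.
have tb : t * b <= t * `|b| by apply: ler_wpM2l; [exact: ltW | exact: ler_norm].
have := a_le t; rewrite t_gt0 /=; have : t < 1 by have := normr_ge0 b; nra.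
move=> -> /(_ isT); nra.
Qed.

Section Prox.
Context {R : realType} {n : nat}.
Implicit Types (phi : vec R n -> \bar R) (u v w : vec R n).

Lemma prox_subdiff {phi lam v u} : eproper phi -> econvex phi -> 0 < lam ->
  is_prox lam phi v u -> subdiff phi u (lam^-1 *: (v - u)).
Proof.
move=> [phi_ninf [u0 phiu0]] phi_cvx lam_gt0 u_prox.
set c := (2 * lam)^-1.
have c_gt0 : 0 < c by rewrite invr_gt0 mulr_gt0.
have lamV : lam^-1 = 2 * c by rewrite /c invfM mulrA divff ?mul1r ?pnatr_eq0.
have [Gu phiu] : exists Gu, phi u = Gu%:E.
  move: (u_prox u0) (phi_ninf u); rewrite -(fineK phiu0).
  by case: (phi u) => [r _ _| |//]; [exists r|].
rewrite /subdiff phiu; split=> // u'.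
case phiu': (phi u') => [Gu'| |]; [| exact: leey | by move: (phi_ninf u'); rewrite phiu'].
rewrite -EFinD lee_fin dotvZl lamV -subr_le0.
(* compare u with t u' + (1 - t) u in the prox objective and let t tend to 0 *)
apply: (@ler0_of_small_mul _ _ (c * normv (u' - u) ^+ 2)) => t t01.
set ut := t *: u' + (1 - t) *: u.
have ut_le := phi_cvx u' u t t01; rewrite -/ut phiu phiu' in ut_le.
have := u_prox ut; rewrite phiu.
move: ut_le (phi_ninf ut); case: (phi ut) => [Gt| |//]; rewrite ?leye_eq //= => ut_le _.
have -> : ut - v = (u - v) + t *: (u' - u) by apply: vecP => i; rewrite !mxE; ring.
rewrite -!EFinM -EFinD in ut_le; rewrite lee_fin in ut_le |- *.
rewrite normv_addZ_sqr -[dotv (u - v) _]opprK -dotvNl opprB -!EFinD lee_fin -/c => u_le.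
have /andP[t_gt0 _] := t01.
rewrite -(ler_pM2l t_gt0); lra.
Qed.

Lemma subdiff_le {phi w s u} : subdiff phi w s -> phi u \is a fin_num ->
  fine (phi w) + dotv s (u - w) <= fine (phi u).
Proof. by move=> [/fineK phiw s_sub] /fineK phiu; have := s_sub u; rewrite -phiw -phiu. Qed.

Lemma prox_le {phi lam v u u'} : eproper phi -> econvex phi -> 0 < lam ->
  is_prox lam phi v u -> phi u' \is a fin_num ->
  lam * fine (phi u) + dotv (v - u) (u' - u) <= lam * fine (phi u').
Proof.
move=> phi_proper phi_cvx lam_gt0 u_prox.
move=> /(subdiff_le (prox_subdiff phi_proper phi_cvx lam_gt0 u_prox)).
by rewrite dotvZl -(ler_pM2l lam_gt0) mulrDr mulrA mulfV ?gt_eqF ?mul1r.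
Qed.

Lemma fin_num_edom {phi u} : phi u \is a fin_num -> edom phi u.
Proof. by rewrite fin_numElt => /andP[_]. Qed.

Lemma econvex_edom {phi a b t} : econvex phi -> edom phi a -> edom phi b -> 0 < t < 1 ->
  edom phi (t *: a + (1 - t) *: b).
Proof.
move=> phi_cvx phia phib /andP[t_gt0 t_lt1]; rewrite /edom.
apply: le_lt_trans (phi_cvx a b t _) _; first by rewrite t_gt0.
by apply: lte_add_pinfty; apply: lte_mul_pinfty; rewrite ?lee_fin ?subr_ge0 ?ltW.
Qed.

Lemma fconj_ge phi w s : ((dotv w s)%:E - phi w <= fconj phi s)%E.
Proof. by apply: ereal_sup_ubound; exists w. Qed.

Lemma fconj_subdiff {phi w s} : (forall x, phi x != -oo%E) ->
  subdiff phi w s -> fconj phi s = ((dotv w s)%:E - phi w)%E.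
Proof.
move=> phi_ninf [/fineK phiw s_sub]; apply/eqP; rewrite eq_le fconj_ge andbT.
apply: ge_ereal_sup => _ [u _ <-]; have := s_sub u.
rewrite -phiw; case: (phi u) (phi_ninf u) => [r _| _ _|//]; last by rewrite addeNy leNye.
by rewrite -!EFinD !lee_fin dotvBr (dotvC s u) (dotvC s w); lra.
Qed.

Lemma prox_fconj {phi lam v w s} : (forall x, phi x != -oo%E) -> 0 < lam ->
  subdiff phi w (v - lam *: w) -> is_prox lam (fconj phi) v s -> s = v - lam *: w.
Proof.
move=> phi_ninf lam_gt0 w_sub s_prox.
set s0 := v - lam *: w.
have [/fineK phiw _] := w_sub.
have := s_prox s0; rewrite (fconj_subdiff phi_ninf w_sub).
move: (fconj_ge phi w s); rewrite -phiw.
case: (fconj phi s) => [r| |//]; rewrite ?leye_eq //= => s_ge.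
have -> : s - v = (s - s0) + (- lam) *: w by apply: vecP => i; rewrite !mxE; ring.
have -> : s0 - v = 0 + (- lam) *: w by apply: vecP => i; rewrite !mxE; ring.
rewrite !normv_addZ_sqr dotv0l !normv_sqr dotv0r.
rewrite -!EFinD !lee_fin -/s0 in s_ge |- * => s_le.
(* by Fenchel-Young the prox objective at s exceeds its value at s0 by |s - s0|^2 / (2 lam) *)
have c_gt0 : 0 < (2 * lam)^-1 by rewrite invr_gt0 mulr_gt0.
have cross : (2 * lam)^-1 * (2 * - lam * dotv (s - s0) w) = dotv w s0 - dotv w s.
  by rewrite dotvBl (dotvC s w) (dotvC s0 w); field; rewrite gt_eqF.
have : (2 * lam)^-1 * dotv (s - s0) (s - s0) <= 0 by lra.
rewrite pmulr_rle0 // => ss0_le0; apply/eqP; rewrite -subr_eq0 -dotvv_eq0.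
by rewrite eq_le ss0_le0 dotvv_ge0.
Qed.

End Prox.

Section RightDerivative.
Context {R : realType}.

Definition is_rderiv0 (ps : R -> R) (c : R) :=
  forall eps, 0 < eps -> exists2 d, 0 < d &
    forall t, 0 < t < d -> `|ps t - ps 0 - t * c| <= eps * t.

Lemma is_rderiv0D ps1 ps2 c1 c2 : is_rderiv0 ps1 c1 -> is_rderiv0 ps2 c2 ->
  is_rderiv0 (fun t => ps1 t + ps2 t) (c1 + c2).
Proof.
move=> ps1_der ps2_der eps eps_gt0.
have eps2_gt0 : 0 < eps / 2 by rewrite divr_gt0.
have [d1 d1_gt0 ps1_le] := ps1_der _ eps2_gt0.
have [d2 d2_gt0 ps2_le] := ps2_der _ eps2_gt0.
exists (Num.min d1 d2) => [|t /andP[t_gt0]]; first by rewrite lt_min d1_gt0.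
rewrite lt_min => /andP[t_lt1 t_lt2].
have := ps1_le t; have := ps2_le t; rewrite t_gt0 t_lt1 t_lt2 => /(_ isT) le2 /(_ isT) le1.
have -> : ps1 t + ps2 t - (ps1 0 + ps2 0) - t * (c1 + c2) =
  (ps1 t - ps1 0 - t * c1) + (ps2 t - ps2 0 - t * c2) by ring.
by apply: le_trans (ler_normD _ _) _; lra.
Qed.

Lemma convex_rderiv0_le ps c :
  (forall t, 0 < t < 1 -> ps t <= t * ps 1 + (1 - t) * ps 0) ->
  is_rderiv0 ps c -> c <= ps 1 - ps 0.
Proof.
move=> ps_cvx ps_der; apply/ler_addgt0Pr => eps eps_gt0.
have [d d_gt0 ps_le] := ps_der eps eps_gt0.
set t := Num.min (d / 2) (1 / 2).
have t_gt0 : 0 < t by rewrite lt_min !divr_gt0.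
have /andP[t_le_d t_le_1] : (t <= d / 2) && (t <= 1 / 2) by rewrite -le_min.
have := ps_cvx t; have := ps_le t; rewrite t_gt0 /=.
have -> : t < d by lra.
have -> : t < 1 by lra.
rewrite ler_norml => /(_ isT) /andP[ps_ge _] /(_ isT) ps_t.
by rewrite -(ler_pM2l t_gt0); lra.
Qed.

Lemma gradient_rderiv0 n (h : vec R n -> R) gh x v : has_gradient h gh ->
  is_rderiv0 (fun t => h (x + t *: v)) (dotv (gh x) v).
Proof.
move=> h_grad eps eps_gt0.
have v_ge0 := normv_ge0 v.
have v1_gt0 : 0 < normv v + 1 by lra.
have [d d_gt0 h_le] := h_grad x (eps / (normv v + 1)) (divr_gt0 eps_gt0 v1_gt0).
exists (d / (normv v + 1)) => [|t /andP[t_gt0]]; first by rewrite divr_gt0.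
rewrite ltr_pdivlMr // => t_lt.
have tv : normv (t *: v) = t * normv v by rewrite normvZ gtr0_norm.
rewrite scale0r addr0 -dotvZr; apply: le_trans (h_le _ _) _; rewrite tv; first by nra.
have frac_le1 : normv v / (normv v + 1) <= 1 by rewrite ler_pdivrMr // mul1r; lra.
rewrite [leLHS](_ : _ = eps * t * (normv v / (normv v + 1))); last by ring.
by apply: ler_piMr; rewrite // mulr_ge0 ?ltW.
Qed.

Lemma jacobian_rderiv0 p q (D : vec R q -> Prop) (H : vec R q -> vec R p) JH x v y :
  has_jacobian_on D H JH -> D x -> (forall t, 0 < t < 1 -> D (x + t *: v)) ->
  is_rderiv0 (fun t => dotv (H (x + t *: v)) y) (dotv (JH x *m v) y).
Proof.
move=> H_jac Dx Dseg eps eps_gt0.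
have [v_ge0 y_ge0] := (normv_ge0 v, normv_ge0 y).
set K := (normv v + 1) * (normv y + 1).
have K_gt0 : 0 < K by rewrite mulr_gt0 //; lra.
have [d d_gt0 H_le] := H_jac x (eps / K) Dx (divr_gt0 eps_gt0 K_gt0).
exists (Num.min 1 (d / (normv v + 1))) => [|t /andP[t_gt0]].
  by rewrite lt_min ltr01 divr_gt0 //; lra.
rewrite lt_min ltr_pdivlMr; last by lra.
move=> /andP[t_lt1 t_lt].
have tv : normv (t *: v) = t * normv v by rewrite normvZ gtr0_norm.
rewrite scale0r addr0 -dotvZl -!dotvBl scalemxAr.
apply: le_trans (cauchy_schwarz _ _) _.
have := H_le (t *: v) (Dseg t _); rewrite t_gt0 t_lt1 tv => /(_ isT).
have -> : t * normv v < d by nra.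
move=> /(_ isT) E_le.
apply: le_trans (ler_wpM2r y_ge0 E_le) _.
have frac_le1 : normv v * normv y / K <= 1 by rewrite ler_pdivrMr // mul1r /K; nra.
rewrite [leLHS](_ : _ = eps * t * (normv v * normv y / K)); last by ring.
by apply: ler_piMr; rewrite // mulr_ge0 ?ltW.
Qed.

Lemma Phi_grad_le {p q} {D : vec R q -> Prop} {h gh} {H : vec R q -> vec R p} {JH x u y} :
  has_gradient h gh -> has_jacobian_on D H JH -> D x -> D u ->
  (forall t, 0 < t < 1 -> D (t *: u + (1 - t) *: x)) ->
  convex_on D (Phi h H ^~ y) ->
  dotv (gradxPhi gh JH x y) (u - x) <= Phi h H u y - Phi h H x y.
Proof.
move=> h_grad H_jac Dx Du Dseg Phi_cvx.
have seg t : x + t *: (u - x) = t *: u + (1 - t) *: x.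
  by apply: vecP => i; rewrite !mxE; ring.
pose ps t := Phi h H (x + t *: (u - x)) y.
have ps0 : ps 0 = Phi h H x y by rewrite /ps scale0r addr0.
have ps1 : ps 1 = Phi h H u y by rewrite /ps scale1r addrC subrK.
rewrite -ps0 -ps1; apply: convex_rderiv0_le => [t t01|].
  by rewrite ps0 ps1 /ps seg; apply: Phi_cvx.
rewrite /gradxPhi dotvDl (dotvC (_ *m y)) -dotv_mulmx.
apply: is_rderiv0D; first exact: gradient_rderiv0.
by apply: (@jacobian_rderiv0 _ _ D) => // t t01; rewrite seg; apply: Dseg.
Qed.

End RightDerivative.

Section PDAcL.
Context {R : realType} {p q : nat}.
Context {f : vec R p -> \bar R} {g : vec R q -> \bar R} {h : vec R q -> R}.
Context {gh : vec R q -> vec R q} {H : vec R q -> vec R p} {JH : vec R q -> 'M[R]_(p, q)}.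
Context {psi xi phi tau_max nu mu eta beta tau0 : R} {M : nat}.
Context {x0 : vec R q} {y0 : vec R p}.
Context {x z : nat -> vec R q} {y w : nat -> vec R p} {tau : nat -> R}.
Hypothesis run :
  PDAcL_run g h gh f H JH psi xi phi tau_max nu mu eta beta tau0 M x0 y0 x z y tau.
Hypotheses (tau0_gt0 : 0 < tau0) (phi_gt0 : 0 < phi) (tau_max_gt0 : 0 < tau_max).
Hypotheses (mu_gt0 : 0 < mu) (psi_gt0 : 0 < psi) (beta_gt0 : 0 < beta).
Hypotheses (f_proper : eproper f) (f_cvx : econvex f).
Hypotheses (g_proper : eproper g) (g_cvx : econvex g).
Hypothesis w_prox : forall n, (0 < n)%N ->
  is_prox (beta * tau n)^-1 f ((beta * tau n)^-1 *: y n.-1 + H (x n)) (w n).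

Lemma PDAcL_tau_gt0 k : 0 < tau k.
Proof.
have [_ _ _ tau_0 step] := run; elim: k => [|k tauk_gt0]; first by rewrite tau_0.
have [_ _ [i [-> _ _ _]]] := step k.+1 isT.
by rewrite mulr_gt0 ?exprn_gt0 // lt_min tau_max_gt0 mulr_gt0.
Qed.

Lemma PDAcL_z_sub_x k : z k - x k = psi *: (z k.+1 - x k).
Proof.
have [_ _ _ _ step] := run; have [-> _ _] := step k.+1 isT.
by apply: vecP => i; rewrite !mxE /=; field; rewrite gt_eqF.
Qed.

Lemma PDAcL_x_prox k :
  is_prox (tau k) g (z k.+1 - tau k *: gradxPhi gh JH (x k) (y k)) (x k.+1).
Proof. by have [_ _ _ _ step] := run; have [_ ? _] := step k.+1 isT. Qed.

Lemma PDAcL_x_fin k : g (x k.+1) \is a fin_num.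
Proof. exact: (prox_subdiff g_proper g_cvx (PDAcL_tau_gt0 k) (PDAcL_x_prox k)).1. Qed.

Lemma PDAcL_x_step_le k u : g u \is a fin_num ->
  tau k * fine (g (x k.+1)) + dotv (z k.+1 - x k.+1) (u - x k.+1)
  <= tau k * fine (g u) + tau k * dotv (gradxPhi gh JH (x k) (y k)) (u - x k.+1).
Proof.
move=> /(prox_le g_proper g_cvx (PDAcL_tau_gt0 k) (PDAcL_x_prox k)).
have -> : z k.+1 - tau k *: gradxPhi gh JH (x k) (y k) - x k.+1
  = (z k.+1 - x k.+1) + (- tau k) *: gradxPhi gh JH (x k) (y k).
  by apply: vecP => i; rewrite !mxE; ring.
by rewrite dotvDl dotvZl; lra.
Qed.

Let lam n := beta * tau n.
Let ybar n := y n.-1 + lam n *: H (x n).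

Lemma PDAcL_w_subdiff_ybar {n} : (0 < n)%N -> subdiff f (w n) (ybar n - lam n *: w n).
Proof.
move=> n_gt0; have lam_gt0 : 0 < lam n by rewrite mulr_gt0 ?PDAcL_tau_gt0.
have := prox_subdiff f_proper f_cvx _ (w_prox n n_gt0); rewrite invr_gt0 invrK.
move=> /(_ lam_gt0); congr subdiff; apply: vecP => i; rewrite /ybar /lam !mxE.
by field; rewrite !gt_eqF ?PDAcL_tau_gt0.
Qed.

Lemma PDAcL_y_step {n} : (0 < n)%N -> y n - y n.-1 = lam n *: (H (x n) - w n).
Proof.
move=> n_gt0; have [_ _ _ _ step] := run; have [_ _ [_ [_ y_prox _ _]]] := step n n_gt0.
have lam_gt0 : 0 < lam n by rewrite mulr_gt0 ?PDAcL_tau_gt0.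
have [f_ninf _] := f_proper.
rewrite (prox_fconj f_ninf lam_gt0 (PDAcL_w_subdiff_ybar n_gt0) y_prox).
by apply: vecP => k; rewrite !mxE; ring.
Qed.

Lemma PDAcL_w_subdiff {n} : (0 < n)%N -> subdiff f (w n) (y n).
Proof.
move=> n_gt0; have := PDAcL_w_subdiff_ybar n_gt0; congr subdiff.
apply/eqP; rewrite -subr_eq0 -[y n](subrK (y n.-1)) PDAcL_y_step //.
by apply/eqP/vecP => k; rewrite !mxE; ring.
Qed.

Lemma PDAcL_primal_le {n u} : (0 < n)%N -> g u \is a fin_num ->
  tau n * (fine (g (x n)) - fine (g u))
  <= dotv (x n.+1 - z n.+1) (u - x n.+1)
     + psi * delta tau n * dotv (x n - z n.+1) (x n.+1 - x n)
     + tau n * dotv (gradxPhi gh JH (x n) (y n) - gradxPhi gh JH (x n.-1) (y n.-1))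
                    (x n - x n.+1)
     + tau n * dotv (gradxPhi gh JH (x n) (y n)) (u - x n).
Proof.
case: n => // m _ u_fin /=; set n := m.+1; set d := tau n / tau m.
have step_n := PDAcL_x_step_le n u u_fin.
have := PDAcL_x_step_le m (x n.+1) (PDAcL_x_fin n).
rewrite -/n PDAcL_z_sub_x dotvZl => step_m.
have d_tau : d * tau m = tau n by rewrite /d divfK // gt_eqF ?PDAcL_tau_gt0.
have d_ge0 : 0 <= d by rewrite /d divr_ge0 // ltW ?PDAcL_tau_gt0.
have := ler_wpM2l d_ge0 step_m; rewrite !mulrDr !mulrA d_tau.
have -> : psi * tau n / tau m = d * psi by rewrite /d; ring.
by move: step_n; rewrite !dotvBl !dotvBr; lra.
Qed.

Lemma PDAcL_Jtilde_le n xs ws yy : (0 < n)%N ->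
  has_gradient h gh -> has_jacobian_on (edom g) H JH ->
  (forall v, edom (fconj f) v -> convex_on (edom g) (Phi h H ^~ v)) ->
  g xs \is a fin_num -> f ws \is a fin_num -> H xs = ws ->
  ((tau n)%:E * Jtilde g h f H xs ws (x n) (w n) yy
    <= (dotv (x n.+1 - z n.+1) (xs - x n.+1)
        + beta^-1 * dotv (y n - y n.-1) (yy - y n)
        + psi * delta tau n * dotv (x n - z n.+1) (x n.+1 - x n)
        + tau n * dotv (gradxPhi gh JH (x n) (y n) - gradxPhi gh JH (x n.-1) (y n.-1))
                       (x n - x n.+1))%:E)%E.
Proof.
move=> n_gt0 h_grad H_jac Phi_cvx gxs_fin fws_fin Hxs.
have [f_ninf _] := f_proper.
have w_sub := PDAcL_w_subdiff n_gt0.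
have [fwn_fin _] := w_sub.
have gxn_fin : g (x n) \is a fin_num by rewrite -(prednK n_gt0) PDAcL_x_fin.
have yn_dom : edom (fconj f) (y n).
  by apply: fin_num_edom; rewrite (fconj_subdiff f_ninf w_sub) fin_numB fwn_fin.
have Phi_le := Phi_grad_le h_grad H_jac (fin_num_edom gxn_fin) (fin_num_edom gxs_fin)
  (fun t t01 => econvex_edom g_cvx (fin_num_edom gxs_fin) (fin_num_edom gxn_fin) t01)
  (Phi_cvx _ yn_dom).
have primal := PDAcL_primal_le n_gt0 gxs_fin.
have dual := subdiff_le w_sub fws_fin.
have tau_gt0 := PDAcL_tau_gt0 n.
rewrite /Jtilde /Fobj -(fineK gxn_fin) -(fineK gxs_fin) -(fineK fws_fin) -(fineK fwn_fin).
rewrite -!EFinD -EFinM lee_fin PDAcL_y_step // dotvZl /lam.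
have -> : beta^-1 * (beta * tau n * dotv (H (x n) - w n) (yy - y n))
  = tau n * dotv (H (x n) - w n) (yy - y n) by field; rewrite gt_eqF.
have := ler_wpM2l (ltW tau_gt0) Phi_le; have := ler_wpM2l (ltW tau_gt0) dual.
move: primal; rewrite /Phi -Hxs !dotvBl !dotvBr.
by rewrite (dotvC (y n)) (dotvC (y n)) (dotvC yy) (dotvC yy); lra.
Qed.

End PDAcL.

Theorem lemma4p1 (R : realType) (p q : nat)
  (f : vec R p -> \bar R) (g : vec R q -> \bar R)
  (h : vec R q -> R) (gh : vec R q -> vec R q) (Lh : R)
  (H : vec R q -> vec R p) (JH : vec R q -> 'M[R]_(p, q))
  (* f, g proper closed convex *)
  (hf : proper_closed_convex f) (hg : proper_closed_convex g)
  (* h convex with L_h-Lipschitz gradient *)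
  (hh : convex_on (fun _ : vec R q => True) h) (hgh : has_gradient h gh)
  (hLh0 : 0 <= Lh)
  (hLh : forall x x' : vec R q, normv (gh x - gh x') <= Lh * normv (x - x'))
  (* H : dom g -> dom f, continuously differentiable with Jacobian JH *)
  (hHdom : forall x, edom g x -> edom f (H x))
  (hJH : has_jacobian_on (edom g) H JH) (hJHc : mx_continuous_on (edom g) JH)
  (hHconv : forall y : vec R p, edom (fconj f) y ->
              convex_on (edom g) (fun x => dotv (H x) y))
  (* (A1) *)
  (hA1 : exists (xs : vec R q) (ys : vec R p),
           is_saddle g h gh f H JH xs ys /\ Lagr g h f H xs ys \is a fin_num)
  (* (A2) *)
  (hA2conv : forall y : vec R p, edom (fconj f) y ->
               convex_on (edom g) (fun x => Phi h H x y))
  (hA2conc : forall x : vec R q, edom g x ->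
               convex_on (edom (fconj f)) (fun y => - Phi h H x y))
  (hA2lip : forall (X : vec R q -> Prop) (Y : vec R p -> Prop),
      bounded_set X -> bounded_set Y ->
      exists (Lyy Lxx Lxy : R), [/\ 0 <= Lyy, 0 <= Lxx, 0 < Lxy &
        forall (x x' : vec R q) (y y' : vec R p),
          X x -> edom g x -> X x' -> edom g x' ->
          Y y -> edom (fconj f) y -> Y y' -> edom (fconj f) y' ->
          normv (gradyPhi H x y - gradyPhi H x y') <= Lyy * normv (y - y') /\
          normv (gradxPhi gh JH x y - gradxPhi gh JH x' y')
            <= Lxx * normv (x - x') + Lxy * normv (y - y')])
  (* fixed point (xs, ws, ys) in Omega~ *)
  (xs : vec R q) (ws : vec R p) (ys : vec R p)
  (hfix_dom : [/\ edom g xs, edom f ws & edom (fconj f) ys])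
  (hfix : [/\ subdiff g xs (- ((JH xs)^T *m ys) - gh xs),
             subdiff f ws ys & H xs = ws])
  (* parameters of PDAc-L *)
  (psi xi phi tau_max nu mu eta beta tau0 : R) (M : nat)
  (x0 : vec R q) (y0 : vec R p)
  (hpsi : 1 < psi < 1 + Num.sqrt 3) (hxi : 0 < xi) (hphi : 1 < phi)
  (homega : 0 < 2 * psi - xi - psi ^+ 3 * phi / (1 + psi))
  (htmax : 0 < tau_max) (hnu : 0 < nu < 1) (hmu : 0 < mu < 1)
  (heta : 0 <= eta < 1) (hM : (1 <= M)%N) (hbeta : 0 < beta)
  (hx0 : edom g x0) (hy0 : edom (fconj f) y0) (htau0 : 0 < tau0 <= tau_max)
  (* iterates *)
  (x z : nat -> vec R q) (y : nat -> vec R p) (tau : nat -> R)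
  (hrun : PDAcL_run g h gh f H JH psi xi phi tau_max nu mu eta beta tau0 M x0 y0
            x z y tau)
  (w : nat -> vec R p)
  (hw : forall n, (0 < n)%N ->
          is_prox (beta * tau n)^-1 f ((beta * tau n)^-1 *: y n.-1 + H (x n)) (w n)) :
  forall (n : nat), (0 < n)%N -> forall yy : vec R p,
    let theta := gradxPhi gh JH (x n) (y n) - gradxPhi gh JH (x n.-1) (y n.-1) in
    ((tau n)%:E * Jtilde g h f H xs ws (x n) (w n) yy
      <= (dotv (x n.+1 - z n.+1) (xs - x n.+1)
          + beta^-1 * dotv (y n - y n.-1) (yy - y n)
          + psi * delta tau n * dotv (x n - z n.+1) (x n.+1 - x n)
          + tau n * dotv theta (x n - x n.+1))%:E)%E.
Proof.
move=> n n_gt0 yy /=.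
have [f_proper _ f_cvx] := hf; have [g_proper _ g_cvx] := hg.
have [[gxs_fin _] [fws_fin _] Hxs] := hfix.
have /andP[psi_gt1 _] := hpsi; have /andP[mu_gt0 _] := hmu.
have /andP[tau0_gt0 _] := htau0.
have psi_gt0 : 0 < psi by apply: lt_trans psi_gt1.
have phi_gt0 : 0 < phi by apply: lt_trans hphi.
exact: (PDAcL_Jtilde_le hrun tau0_gt0 phi_gt0 htmax mu_gt0 psi_gt0 hbeta
  f_proper f_cvx g_proper g_cvx hw n xs ws yy n_gt0 hgh hJH hA2conv gxs_fin fws_fin Hxs).
Qed.
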